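(* Let $\{M_p\mid p\in P\}$ be a Morse decomposition of a multivector field on a finite simplicial complex $K$, and let $\sigma_1,\dots,\sigma_n$ and $\sigma'_1,\dots,\sigma'_n$ be two Morse fixed admissible enumerations of $K$, with filtered boundary matrices $A$ and $A'$. Let $S$ and $S'$ be the connection matrices output by ConMat on $A$ and $A'$ respectively. Then $S[i,j]=S'[i',j']$ whenever $i,j$ index rows/columns of $S$ and $\sigma'_{i'}=\sigma_i$, $\sigma'_{j'}=\sigma_j$ (in which case $i',j'$ index rows/columns of $S'$).
   Context: $K$ is a finite simplicial complex ($\tau\le\sigma$: $\tau$ is a face of $\sigma$; $\mathrm{cl}(\sigma)=\{\tau:\tau\le\sigma\}$). A multivector field $\mathcal V$ on $K$ is a partition of $K$ into convex sets $V$ (if $\sigma,\tau\in V$ and $\sigma\le\mu\le\tau$ then $\mu\in V$); $[\sigma]_{\mathcal V}$ is the part containing $\sigma$, $F_{\mathcal V}(\sigma)=[\sigma]_{\mathcal V}\cup\mathrm{cl}(\sigma)$, and a path is a sequence $\sigma_1,\dots,\sigma_r$ with $\sigma_k\in F_{\mathcal V}(\sigma_{k-1})$. A Morse decomposition indexed by a finite poset $(P,\le_P)$ is a partition $K=\bigsqcup_{p\in P}M_p$ such that every path from $M_p$ to $M_q$ has $q\le_P p$; $[\sigma]_P$ is the $p$ with $\sigma\in M_p$. An admissible enumeration is $\sigma_1,\dots,\sigma_n$ of all simplices of $K$ such that (a) for some linear extension $\le_{lin}$ of $\le_P$, $i\le j\Rightarrow[\sigma_i]_P\le_{lin}[\sigma_j]_P$;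 (b) if $\sigma_i$ is a proper face of $\sigma_j$ then $i<j$. Two admissible enumerations are Morse fixed if for every $p$ they induce the same order on $M_p$. The filtered boundary matrix is the $n\times n$ $\mathbb Z_2$-matrix with entry $(i,j)$ equal to $1$ iff $\sigma_i$ is a codimension-one face of $\sigma_j$; row/column $i$ represents $\sigma_i$. For a nonzero column $j$ of a matrix $B$, $\mathrm{low}_B(j)$ is the largest $i$ with $B[i,j]=1$. Column (and row) $j$ is homogeneous if nonzero and $\sigma_j$, $\sigma_{\mathrm{low}_B(j)}$ are in the same Morse set; then index $\mathrm{low}_B(j)$ is targetable. $J_h(B)$, $J_t(B)$: sets of homogeneous, targetable indices. Algorithm ConMat on $A$ (in place): for $j=1,\dots,n$: for $i=\mathrm{low}_A(j)$ down to $1$: if $A[i,j]=1$ and some column $s<j$ of the current matrix is homogeneous with $\mathrm{low}_A(s)=i$, add column $s$ to column $j$ (mod 2). With $A_{out}$ the result, let $J=\{1,\dots,n\}\setminus J_h(A_{out})\setminus J_t(A_{out})$; the output $S$ is the submatrix of $A_{out}$ on rows and columns in $J$. *)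

From HB Require Import structures.
From mathcomp Require Import all_boot all_order all_algebra.
Set Implicit Arguments. Unset Strict Implicit. Unset Printing Implicit Defensive.
Import Order.TTheory GRing.Theory.

Section Defs.
Variable V : finType.

Definition simplicial_complex (K : {set {set V}}) : Prop :=
  set0 \notin K /\
  forall s t : {set V}, s \in K -> t \subset s -> t != set0 -> t \in K.

Definition cl (K : {set {set V}}) (s : {set V}) : {set {set V}} :=
  [set t in K | t \subset s].

Definition convex (X : {set {set V}}) : Prop :=
  forall s t mu : {set V}, s \in X -> t \in X -> s \subset mu -> mu \subset t ->
    mu \in X.

Definition multivector_field (K : {set {set V}}) (MV : {set {set {set V}}}) : Prop :=
  partition MV K /\ forall X, X \in MV -> convex X.

Definition Fmv (K : {set {set V}}) (MV : {set {set {set V}}}) (s : {set V}) :=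
  pblock MV s :|: cl K s.

Definition mv_path (K : {set {set V}}) (MV : {set {set {set V}}})
  (x0 : {set V}) (p : seq {set V}) : bool :=
  path (fun a b => b \in Fmv K MV a) x0 p.

(* Morse decomposition indexed by the finite poset P: the map m assigns to
   each simplex of K the index of its Morse set, M_p = [set s in K | m s == p]. *)
Definition morse_decomposition (d : Order.disp_t) (P : finPOrderType d)
  (K : {set {set V}}) (MV : {set {set {set V}}}) (m : {set V} -> P) : Prop :=
  forall (x0 : {set V}) (p : seq {set V}),
    x0 \in K -> mv_path K MV x0 p -> (m (last x0 p) <= m x0)%O.

(* An enumeration sigma_1..sigma_n (0-based here) of all simplices of K. *)
Definition enumeration (K : {set {set V}}) (n : nat) (sig : 'I_n -> {set V}) : Prop :=
  injective sig /\ [set sig i | i : 'I_n] = K.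

Definition linear_extension (d : Order.disp_t) (P : finPOrderType d) (lin : rel P) : Prop :=
  reflexive lin /\ antisymmetric lin /\ transitive lin /\ total lin /\
  forall p q : P, (p <= q)%O -> lin p q.

Definition admissible (d : Order.disp_t) (P : finPOrderType d) (m : {set V} -> P)
  (n : nat) (sig : 'I_n -> {set V}) : Prop :=
  (exists lin : rel P, linear_extension lin /\
     forall i j : 'I_n, (i <= j)%N -> lin (m (sig i)) (m (sig j))) /\
  (forall i j : 'I_n, sig i \proper sig j -> (i < j)%N).

(* Same order induced on each Morse set. *)
Definition morse_fixed (d : Order.disp_t) (P : finPOrderType d) (m : {set V} -> P)
  (n : nat) (sig sig' : 'I_n -> {set V}) : Prop :=
  forall i j i' j' : 'I_n, sig' i' = sig i -> sig' j' = sig j ->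
    m (sig i) = m (sig j) -> (i < j)%N = (i' < j')%N.

Definition bdmx (n : nat) (sig : 'I_n -> {set V}) : 'M['F_2]_n :=
  \matrix_(i, j) (if (sig i \subset sig j) && (#|sig j| == #|sig i|.+1)
                  then 1%R else 0%R).

Definition low (n : nat) (B : 'M['F_2]_n) (j : 'I_n) : option 'I_n :=
  [pick i | (B i j != 0%R) && [forall k : 'I_n, (B k j != 0%R) ==> (k <= i)%N]].

Definition homogeneous (d : Order.disp_t) (P : finPOrderType d) (m : {set V} -> P)
  (n : nat) (sig : 'I_n -> {set V}) (B : 'M['F_2]_n) (j : 'I_n) : bool :=
  if low B j is Some i then m (sig i) == m (sig j) else false.

Definition targetable (d : Order.disp_t) (P : finPOrderType d) (m : {set V} -> P)
  (n : nat) (sig : 'I_n -> {set V}) (B : 'M['F_2]_n) (k : 'I_n) : bool :=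
  [exists j : 'I_n, homogeneous m sig B j && (low B j == Some k)].

Definition addcol (n : nat) (B : 'M['F_2]_n) (s j : 'I_n) : 'M['F_2]_n :=
  \matrix_(a, b) (if b == j then (B a j + B a s)%R else B a b).

Definition conmat_step (d : Order.disp_t) (P : finPOrderType d) (m : {set V} -> P)
  (n : nat) (sig : 'I_n -> {set V}) (j : 'I_n) (B : 'M['F_2]_n) (i : 'I_n) :
  'M['F_2]_n :=
  if B i j != 0%R then
    match [pick s : 'I_n | [&& (s < j)%N, homogeneous m sig B s & low B s == Some i]] with
    | Some s => addcol B s j
    | None => B
    end
  else B.

Definition conmat_col (d : Order.disp_t) (P : finPOrderType d) (m : {set V} -> P)
  (n : nat) (sig : 'I_n -> {set V}) (B : 'M['F_2]_n) (j : 'I_n) : 'M['F_2]_n :=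
  match low B j with
  | None => B
  | Some l => foldl (conmat_step m sig j) B [seq i <- rev (enum (ordinal n)) | (nat_of_ord i <= nat_of_ord l)%N]
  end.

Definition ConMatOut (d : Order.disp_t) (P : finPOrderType d) (m : {set V} -> P)
  (n : nat) (sig : 'I_n -> {set V}) (A : 'M['F_2]_n) : 'M['F_2]_n :=
  foldl (conmat_col m sig) A (enum 'I_n).

Definition ConMatJ (d : Order.disp_t) (P : finPOrderType d) (m : {set V} -> P)
  (n : nat) (sig : 'I_n -> {set V}) (A : 'M['F_2]_n) : {set 'I_n} :=
  let B := ConMatOut m sig A in
  [set k : 'I_n | ~~ homogeneous m sig B k && ~~ targetable m sig B k].

Definition ConMatS (d : Order.disp_t) (P : finPOrderType d) (m : {set V} -> P)
  (n : nat) (sig : 'I_n -> {set V}) (A : 'M['F_2]_n) :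
  'M['F_2]_#|ConMatJ m sig A| :=
  \matrix_(a, b) ConMatOut m sig A (enum_val a) (enum_val b).

End Defs.

From HB Require Import structures.
From mathcomp Require Import all_boot all_order all_algebra fingroup perm.
Set Implicit Arguments. Unset Strict Implicit. Unset Printing Implicit Defensive.
Import Order.TTheory GRing.Theory.
Local Open Scope ring_scope.

(* ConMat's output C is characterized by three properties: every nonzero entry
   C[a,b] has [sigma_a]_P <= [sigma_b]_P; each column j is column j of A plus a
   combination of "eligible" columns s < j of C (homogeneous, with
   [sigma_s]_P <= [sigma_j]_P); and column j vanishes on the pivot rows of its
   eligible columns.  Eligible columns have pairwise distinct pivots, so looking
   at the largest pivot occurring in a difference of two such combinations shows
   that these properties determine C column by column.
   For Morse fixed admissible enumerations, sigma'_a = sigma_(s a) for a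
   permutation s that preserves the order of a and b whenever
   [sigma'_a]_P <= [sigma'_b]_P (by Morse fixedness when the Morse sets agree, by
   admissibility otherwise).  Such an s carries the characterization for sigma to
   the one for sigma', so A'_out is A_out relabelled by s; homogeneity and
   targetability are relabelled as well, hence so are J and S. *)


Lemma F2_neq0 (x : 'F_2) : x != 0 -> x = 1.
Proof. by case: x => [[|[|]]] // ? ?; apply/val_inj. Qed.

Lemma F2_add11 : 1 + 1 = 0 :> 'F_2.
Proof. by apply/val_inj. Qed.

Section Pivots.
Variable n : nat.
Implicit Types (B C : 'M['F_2]_n) (i j k : 'I_n).

Lemma lowP B j i :
  reflect (B i j != 0 /\ forall k, B k j != 0 -> (k <= i)%N) (low B j == Some i).
Proof.
rewrite /low; case: pickP => [i0 /andP[nz0 /forallP max0]|none].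
  apply: (iffP eqP) => [[<-]|[nz maxi]].
    by split=> // k; apply/implyP; apply: max0.
  by congr Some; apply/val_inj/eqP; rewrite eqn_leq maxi // (implyP (max0 i)).
apply: (iffP idP) => // -[nz maxi].
have : [forall k, (B k j != 0) ==> (k <= i)%N].
  by apply/forallP => k; apply/implyP; apply: maxi.
by move: (none i) => /=; rewrite nz /= => ->.
Qed.

Lemma low_ext B B' j j' : (forall a, B a j = B' a j') -> low B j = low B' j'.
Proof.
move=> eq_col; apply: eq_pick => i /=; rewrite eq_col; congr andb.
by apply: eq_forallb => k; rewrite eq_col.
Qed.

Lemma low_None B j : low B j = None -> forall k, B k j = 0.
Proof.
move=> lowj k; apply/eqP/negPn/negP => nzk.
have [i nzi maxi] := @arg_maxnP _ k (fun i => B i j != 0) val nzk.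
by have /lowP := conj nzi maxi; rewrite lowj.
Qed.

Lemma comb_pivots_eq0 C (z : 'I_n -> 'F_2) :
  (forall s, z s != 0 -> low C s != None) ->
  {in [pred s | z s != 0] &, injective (low C)} ->
  (forall s i, z s != 0 -> low C s = Some i -> \sum_t z t * C i t = 0) ->
  forall s, z s = 0.
Proof.
move=> has_low low_inj vanish s0; apply/eqP/negPn/negP => nz0.
(* [s1]: the support column with the largest pivot; no other support column is
   nonzero in its pivot row. *)
have [s1 nz1 max1] :=
  @arg_maxnP _ s0 (fun s => z s != 0) (fun s => val (odflt s (low C s))) nz0.
case E1: (low C s1) (has_low s1 nz1) => [i1|//] _.
have /eqP/lowP[nzC1 _] := E1.
have := vanish s1 i1 nz1 E1; rewrite (bigD1 s1) //= big1 ?addr0 => [/eqP|t ts1].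
  by rewrite mulf_eq0 (negbTE nz1) (negbTE nzC1).
have [->|nzt] := eqVneq (z t) 0; first by rewrite mul0r.
have [->|nzCt] := eqVneq (C i1 t) 0; first by rewrite mulr0.
case Et: (low C t) (has_low t nzt) => [it|//] _.
have /eqP/lowP[_ maxt] := Et.
have := max1 t nzt; rewrite Et E1 /= => le_it.
have it_i1 : it = i1 by apply/val_inj/eqP; rewrite eqn_leq le_it maxt.
by case/eqP: ts1; apply: low_inj; rewrite ?inE // Et E1 it_i1.
Qed.

End Pivots.

Section Reduction.
Variables (V : finType) (d : Order.disp_t) (P : finPOrderType d) (m : {set V} -> P).
Variables (n : nat) (sig : 'I_n -> {set V}).
Implicit Types (A B C : 'M['F_2]_n) (a b i j s t : 'I_n).

Definition respects_morse B := forall a b, B a b != 0 -> (m (sig a) <= m (sig b))%O.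

Definition eligible B j s :=
  [&& (s < j)%N, homogeneous m sig B s & (m (sig s) <= m (sig j))%O].

Definition is_reduction A C :=
  [/\ respects_morse C,
      forall j, exists2 x : 'I_n -> 'F_2, (forall s, x s != 0 -> eligible C j s) &
        forall a, C a j = A a j + \sum_s x s * C a s
    & forall j s i, eligible C j s -> low C s = Some i -> C i j = 0].

Lemma homogeneousP B j :
  reflect (exists2 i, low B j = Some i & m (sig i) = m (sig j))
          (homogeneous m sig B j).
Proof.
rewrite /homogeneous; case: (low B j) => [i|]; last by constructor=> -[].
by apply: (iffP eqP) => [|[_ [<-]]]; first exists i.
Qed.

Lemma homogeneous_pivot B j i :
  homogeneous m sig B j -> low B j = Some i -> m (sig i) = m (sig j).
Proof. by case/homogeneousP=> i' -> + [<-]. Qed.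

Lemma homogeneous_ext B B' j :
  (forall a, B a j = B' a j) -> homogeneous m sig B j = homogeneous m sig B' j.
Proof. by move=> eq_col; rewrite /homogeneous (low_ext eq_col). Qed.

Lemma eligible_ext B B' j s :
  (forall a, B a s = B' a s) -> eligible B j s = eligible B' j s.
Proof. by move=> eq_col; rewrite /eligible (homogeneous_ext eq_col). Qed.

Lemma eligible_pivot_inj A C j :
  is_reduction A C -> {in eligible C j &, injective (low C)}.
Proof.
case=> _ _ vanish s t /and3P[_ /homogeneousP[i ls ms] _].
move=> /and3P[_ /homogeneousP[i' lt mt] _]; rewrite ls lt => -[ii']; subst i'.
have no_lt u v : low C u = Some i -> low C v = Some i ->
    m (sig i) = m (sig u) -> m (sig i) = m (sig v) -> ~~ (u < v)%N.
  move=> lu lv mu mv; apply/negP => uv.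
  have elig : eligible C v u.
    by rewrite /eligible uv -mu -mv lexx andbT; apply/homogeneousP; exists i.
  by have /eqP/lowP[] := lv; rewrite (vanish v u i elig lu) eqxx.
case: (ltngtP s t) => [st|ts|/val_inj //].
  by case/negP: (no_lt s t ls lt ms mt).
by case/negP: (no_lt t s lt ls mt ms).
Qed.

Lemma reduction_col_unique A C1 C2 j :
  is_reduction A C1 -> is_reduction A C2 ->
  (forall s a, (s < j)%N -> C1 a s = C2 a s) -> forall a, C1 a j = C2 a j.
Proof.
move=> red1 red2 prev; have [_ comb1 van1] := red1; have [_ comb2 van2] := red2.
have [x1 el1 col1] := comb1 j; have [x2 el2 col2] := comb2 j.
have elig12 s : eligible C1 j s -> eligible C2 j s.
  by move=> el; case/and3P: (el) => sj _ _; rewrite -(eligible_ext _ (prev s ^~ sj)).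
have el2' s : x2 s != 0 -> eligible C1 j s.
  by move=> /el2 el; case/and3P: (el) => sj _ _; rewrite (eligible_ext _ (prev s ^~ sj)).
have col2' a : C2 a j = A a j + \sum_s x2 s * C1 a s.
  rewrite col2; congr (_ + _); apply: eq_bigr => s _.
  have [->|/el2'/and3P[sj _ _]] := eqVneq (x2 s) 0; first by rewrite !mul0r.
  by rewrite prev.
pose z s := x1 s - x2 s.
have elz s : z s != 0 -> eligible C1 j s.
  have [x10|/el1 el _ //] := eqVneq (x1 s) 0.
  by rewrite /z x10 sub0r oppr_eq0 => /el2'.
have z0 : forall s, z s = 0.
  apply: (comb_pivots_eq0 (C := C1)).
  - by move=> s /elz/and3P[_ /homogeneousP[i -> _] _].
  - by move=> s t /elz els /elz elt; apply: eligible_pivot_inj red1 s t els elt.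
  move=> s i /elz el ls; under eq_bigr do rewrite mulrBl.
  rewrite sumrB; apply/eqP; rewrite subr_eq0; apply/eqP; apply: (addrI (A i j)).
  rewrite -col1 -col2' (van1 j s i el ls) (van2 j s i (elig12 s el)) //.
  by rewrite -ls; apply: low_ext => a; case/and3P: el => sj _ _; rewrite prev.
move=> a; rewrite col1 col2'; congr (_ + _); apply: eq_bigr => s _.
by move/eqP: (z0 s); rewrite subr_eq0 => /eqP->.
Qed.

Lemma reduction_unique A C1 C2 : is_reduction A C1 -> is_reduction A C2 -> C1 = C2.
Proof.
move=> red1 red2.
suff eq_col : forall (k : nat) (j : 'I_n), (j < k)%N -> forall a, C1 a j = C2 a j.
  by apply/matrixP => a j; exact: eq_col j.+1 j (ltnSn j) a.
elim=> // k IH j jk; apply: reduction_col_unique red1 red2 _ => s a sj.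
by apply: IH; apply: leq_trans sj jk.
Qed.


(* [R]: the rows of column [j] already processed by the inner loop of ConMat. *)
Definition partly_reduced_col B j (R : pred 'I_n) B' :=
  [/\ forall a b, b != j -> B' a b = B a b,
      exists2 x : 'I_n -> 'F_2, (forall s, x s != 0 -> eligible B j s) &
        forall a, B' a j = B a j + \sum_s x s * B a s
    & forall s i, eligible B j s -> low B s = Some i -> R i -> B' i j = 0].

Lemma partly_reduced_col_sub B j (R R' : pred 'I_n) B' :
  (forall i, R' i -> R i) -> partly_reduced_col B j R B' -> partly_reduced_col B j R' B'.
Proof. by move=> sub [off comb van]; split=> // s i el ls /sub; exact: van el ls. Qed.

Lemma partly_reduced_col_respects B j R B' :
  respects_morse B -> partly_reduced_col B j R B' ->
  forall a, B' a j != 0 -> (m (sig a) <= m (sig j))%O.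
Proof.
move=> bnd [_ [x elx colj] _] a; apply: contraTT => not_le; rewrite negbK.
rewrite colj big1 ?addr0 => [|s _]; first exact: contraNT (bnd a j) not_le.
have [->|/elx/and3P[_ _ le_sj]] := eqVneq (x s) 0; first by rewrite mul0r.
apply/eqP; rewrite mulf_eq0 orbC (contraNT (bnd a s)) //.
by apply: contra not_le => le_as; apply: le_trans le_as le_sj.
Qed.

Lemma conmat_step_partly_reduced B j R B' i0 :
  respects_morse B -> partly_reduced_col B j R B' -> (forall r, R r -> (i0 < r)%N) ->
  partly_reduced_col B j [pred r | R r || (r == i0)] (conmat_step m sig j B' i0).
Proof.
move=> bnd red gt_i0; have [off [x elx colj] van] := red.
have old_col s a : (s < j)%N -> B' a s = B a s.
  by move=> sj; apply: off; rewrite -val_eqE /= neq_ltn sj.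
rewrite /conmat_step; case: ifPn => [nz|/negPn/eqP z0]; last first.
  split=> //; first by exists x.
  by move=> s i el ls /orP[/(van s i el ls)//|/eqP->].
case: pickP => [s0 /and3P[s0j hs0 /eqP ls0]|none]; last first.
  split=> //; first by exists x.
  move=> s i el ls /orP[/(van s i el ls)//|/eqP i_i0]; case/and3P: (el) => sj hs _.
  have := none s; rewrite /= sj (homogeneous_ext (old_col s ^~ sj)) hs.
  by rewrite (low_ext (old_col s ^~ sj)) ls i_i0 eqxx.
rewrite (homogeneous_ext (old_col s0 ^~ s0j)) in hs0.
rewrite (low_ext (old_col s0 ^~ s0j)) in ls0.
have el0 : eligible B j s0.
  rewrite /eligible s0j hs0 -(homogeneous_pivot hs0 ls0) /=.
  exact: partly_reduced_col_respects bnd red _ nz.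
have /eqP/lowP[nz0 max0] := ls0.
split.
- by move=> a b bj; rewrite mxE (negbTE bj) off.
- exists (fun s => x s + (s == s0)%:R) => [s|a].
    by have [->|_] := eqVneq s s0; rewrite ?addr0 => // /elx.
  rewrite mxE eqxx colj (old_col s0 a s0j) -addrA; congr (_ + _).
  symmetry; under eq_bigr do rewrite mulrDl; rewrite big_split /=; congr (_ + _).
  by rewrite (bigD1 s0) //= eqxx mul1r big1 ?addr0 // => s /negbTE->; rewrite mul0r.
- move=> s i el ls; rewrite mxE eqxx (old_col s0 i s0j) => /orP[Ri|/eqP->].
    rewrite (van s i el ls Ri) add0r; apply/eqP; apply: contraTT (gt_i0 _ Ri).
    by rewrite -ltnNge ltnS; apply: max0.
  by rewrite (F2_neq0 nz) (F2_neq0 nz0) F2_add11.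
Qed.

Lemma conmat_steps_partly_reduced B j (rows : seq 'I_n) (R : pred 'I_n) B' :
  respects_morse B -> sorted (fun a b : 'I_n => (a < b)%N) rows ->
  partly_reduced_col B j R B' -> (forall r i, r \in rows -> R i -> (r < i)%N) ->
  partly_reduced_col B j [pred i | R i || (i \in rows)]
    (foldr (fun r B'' => conmat_step m sig j B'' r) B' rows).
Proof.
move=> bnd; elim: rows R B' => [|r rows IH] R B' sorted_rows red lt_R /=.
  by apply: partly_reduced_col_sub red => i /orP[].
have lt_rows : all (fun i : 'I_n => (r < i)%N) rows.
  by apply: order_path_min sorted_rows; apply: ltn_trans.
have red' := IH R B' (path_sorted sorted_rows) red.
apply: partly_reduced_col_sub (conmat_step_partly_reduced bnd (red' _) _) => [i|r' i r'_in|i].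
- by rewrite /= inE => /orP[->|/orP[->|->]]; rewrite ?orbT.
- by apply: lt_R; rewrite inE r'_in orbT.
by case/orP=> [/(lt_R r i (mem_head _ _))|/(allP lt_rows)].
Qed.

Lemma conmat_col_partly_reduced B j :
  respects_morse B -> partly_reduced_col B j predT (conmat_col m sig B j).
Proof.
move=> bnd; rewrite /conmat_col.
have no_comb : exists2 x : 'I_n -> 'F_2, (forall s, x s != 0 -> eligible B j s) &
    forall a, B a j = B a j + \sum_s x s * B a s.
  by exists (fun=> 0) => [s|a]; rewrite ?eqxx // big1 ?addr0 // => s _; rewrite mul0r.
case E: (low B j) => [l|]; last by split=> // s i _ _ _; rewrite (low_None E).
have /eqP/lowP[_ maxl] := E.
(* Rows below the pivot [l] are zero, so they count as processed. *)
have red0 : partly_reduced_col B j (fun i => (l < i)%N) B.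
  split=> // s i _ _ li; apply/eqP; apply: contraTT li => /maxl.
  by rewrite -leqNgt.
have sorted_enum : sorted (fun a b : 'I_n => (a < b)%N) (enum 'I_n).
  by have := iota_ltn_sorted 0 n; rewrite -val_enum_ord sorted_map.
rewrite filter_rev foldl_rev.
apply: partly_reduced_col_sub (conmat_steps_partly_reduced bnd _ red0 _).
- by move=> i _ /=; rewrite mem_filter mem_enum andbT ltnNge orNb.
- by apply: sorted_filter sorted_enum => a b c; apply: ltn_trans.
by move=> r i; rewrite mem_filter => /andP[ri _] li; apply: leq_ltn_trans ri li.
Qed.

Definition partial_reduction A B k :=
  [/\ respects_morse B,
      forall a b, (k <= b)%N -> B a b = A a b,
      forall j, (j < k)%N -> exists2 x : 'I_n -> 'F_2,
        (forall s, x s != 0 -> eligible B j s) &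
        forall a, B a j = A a j + \sum_s x s * B a s
    & forall j s i, (j < k)%N -> eligible B j s -> low B s = Some i -> B i j = 0].

Lemma conmat_col_partial_reduction A B k (lt_kn : (k < n)%N) :
  partial_reduction A B k ->
  partial_reduction A (conmat_col m sig B (Ordinal lt_kn)) k.+1.
Proof.
set j := Ordinal lt_kn; set B' := conmat_col _ _ _ _.
case=> bnd fresh comb van; have red := conmat_col_partly_reduced j bnd.
have [off [x elx colj] clr] := red; rewrite -/B' in off colj clr red.
have old s a : (s < k)%N -> B' a s = B a s.
  by move=> sk; apply: off; rewrite -val_eqE /= neq_ltn sk.
have old_elig j' s : (s < k)%N -> eligible B' j' s = eligible B j' s.
  by move=> sk; apply: eligible_ext => a; apply: old.
have old_sum (y : 'I_n -> 'F_2) j' a : (j' <= k)%N ->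
    (forall s, y s != 0 -> eligible B j' s) -> \sum_s y s * B' a s = \sum_s y s * B a s.
  move=> j'k ely; apply: eq_bigr => s _.
  have [->|/ely/and3P[sj' _ _]] := eqVneq (y s) 0; first by rewrite !mul0r.
  by rewrite old // (leq_trans sj' j'k).
have ltSk j' : (j' < k.+1)%N -> (j' < k)%N \/ j' = j.
  by rewrite ltnS leq_eqVlt => /orP[/eqP j'k|]; [right; apply: val_inj|left].
split.
- move=> a b; have [->|bj] := eqVneq b j.
    exact: partly_reduced_col_respects bnd red a.
  by rewrite off //; apply: bnd.
- by move=> a b kb; rewrite off ?fresh //; [exact: ltnW | by rewrite -val_eqE /= neq_ltn kb orbT].
- move=> j' /ltSk[j'k|->].
    have [y ely col] := comb j' j'k; exists y => [s ys|a].
      by case/and3P: (ely s ys) => sj' _ _; rewrite old_elig ?ely // (ltn_trans sj').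
    by rewrite old // col (old_sum _ j') // ltnW.
  exists x => [s xs|a]; first by case/and3P: (elx s xs) => sj _ _; rewrite old_elig ?elx.
  by rewrite colj fresh // (old_sum _ j).
move=> j' s i /ltSk[j'k|->] el; have /and3P[sj' _ _] := el.
  have sk := ltn_trans sj' j'k.
  rewrite old_elig // in el; rewrite (low_ext (old s ^~ sk)) => ls.
  by rewrite old // (van j' s i j'k el ls).
rewrite old_elig // in el; rewrite (low_ext (old s ^~ sj')) => ls.
exact: clr s i el ls isT.
Qed.

Lemma ConMatOut_reduction A : respects_morse A -> is_reduction A (ConMatOut m sig A).
Proof.
move=> bndA.
suff /(_ n (leqnn n)) : forall k, (k <= n)%N ->
    partial_reduction A (foldl (conmat_col m sig) A (take k (enum 'I_n))) k.
  rewrite take_oversize ?size_enum_ord // => -[bnd _ comb van].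
  by split=> // [j|j s i]; [apply: comb | apply: van].
elim=> [_|k IH lt_kn]; first by rewrite take0; split=> // j.
rewrite (take_nth (Ordinal lt_kn)) ?size_enum_ord // foldl_rcons.
have -> : nth (Ordinal lt_kn) (enum 'I_n) k = Ordinal lt_kn.
  by apply/val_inj; rewrite /= nth_enum_ord.
exact/conmat_col_partial_reduction/IH/ltnW.
Qed.

End Reduction.

Definition relabel (R : Type) n (s : 'S_n) (B : 'M[R]_n) : 'M[R]_n :=
  row_perm s (col_perm s B).

Lemma relabelE (R : Type) n (s : 'S_n) (B : 'M[R]_n) a b :
  relabel s B a b = B (s a) (s b).
Proof. by rewrite !mxE. Qed.

Section Relabel.
Variables (V : finType) (d : Order.disp_t) (P : finPOrderType d) (m : {set V} -> P).
Variables (n : nat) (sig sig' : 'I_n -> {set V}) (s : 'S_n).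
Hypothesis sig'E : forall a, sig' a = sig (s a).
Hypothesis relabel_ltn :
  forall a b, (m (sig' a) <= m (sig' b))%O -> (s a < s b)%N = (a < b)%N.
Implicit Types (A C : 'M['F_2]_n) (a b i t : 'I_n).

Lemma relabel_leq a b : (m (sig' a) <= m (sig' b))%O -> (s a <= s b)%N = (a <= b)%N.
Proof.
move=> le_ab; rewrite leq_eqVlt [RHS]leq_eqVlt relabel_ltn //.
by rewrite val_eqE (inj_eq perm_inj) val_eqE.
Qed.

Lemma respects_morse_relabel C :
  respects_morse m sig C -> respects_morse m sig' (relabel s C).
Proof. by move=> bnd a b; rewrite relabelE !sig'E; apply: bnd. Qed.

Lemma low_relabel C a b : respects_morse m sig C -> m (sig' a) = m (sig' b) ->
  (low (relabel s C) b == Some a) = (low C (s b) == Some (s a)).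
Proof.
move=> bnd mab.
have le_a k : C (s k) (s b) != 0 -> (m (sig' k) <= m (sig' a))%O.
  by move=> /bnd; rewrite -!sig'E mab.
apply/lowP/lowP => -[nz max].
  split=> [|k]; first by rewrite -relabelE.
  rewrite -(permKV s k) => nzk.
  by rewrite relabel_leq; [apply: max; rewrite relabelE | apply: le_a].
split=> [|k]; first by rewrite relabelE.
by rewrite relabelE => nzk; rewrite -relabel_leq; [apply: max | apply: le_a].
Qed.

Lemma homogeneous_relabel C b : respects_morse m sig C ->
  homogeneous m sig' (relabel s C) b = homogeneous m sig C (s b).
Proof.
move=> bnd; apply/homogeneousP/homogeneousP => -[a la ma].
  exists (s a); last by rewrite -!sig'E.
  by apply/eqP; rewrite -low_relabel // la.
exists (s^-1 a)%g; last by rewrite !sig'E permKV.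
by apply/eqP; rewrite low_relabel ?permKV ?la // !sig'E permKV.
Qed.

Lemma targetable_relabel C a : respects_morse m sig C ->
  targetable m sig' (relabel s C) a = targetable m sig C (s a).
Proof.
move=> bnd; apply/existsP/existsP => -[j /andP[hj lj]].
  exists (s j); rewrite -homogeneous_relabel // hj -low_relabel //.
  exact: homogeneous_pivot hj (eqP lj).
exists (s^-1 j)%g; rewrite homogeneous_relabel ?permKV // hj low_relabel ?permKV //.
by rewrite !sig'E permKV; exact: homogeneous_pivot hj (eqP lj).
Qed.

Lemma eligible_relabel C b t : respects_morse m sig C ->
  eligible m sig' (relabel s C) b t = eligible m sig C (s b) (s t).
Proof.
move=> bnd; rewrite /eligible homogeneous_relabel // -!sig'E.
by case: (boolP (m (sig' t) <= m (sig' b))%O) => [le|]; rewrite ?andbF ?relabel_ltn.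
Qed.

Lemma is_reduction_relabel A C :
  is_reduction m sig A C -> is_reduction m sig' (relabel s A) (relabel s C).
Proof.
case=> bnd comb van; split; first exact: respects_morse_relabel.
  move=> b; have [x elx colb] := comb (s b).
  exists (x \o s) => [t /elx|a]; first by rewrite eligible_relabel.
  rewrite !relabelE colb (reindex_inj (@perm_inj _ s)); congr (_ + _).
  by apply: eq_bigr => t _; rewrite relabelE.
move=> b t i elt lt; have /and3P[_ ht _] := elt.
rewrite eligible_relabel // in elt.
rewrite relabelE (van _ (s t)) //; apply/eqP; rewrite -low_relabel ?lt //.
exact: homogeneous_pivot ht lt.
Qed.

End Relabel.

Section MorseFixed.
Variables (V : finType) (d : Order.disp_t) (P : finPOrderType d) (m : {set V} -> P).
Variable n : nat.
Implicit Types (sig : 'I_n -> {set V}) (a b : 'I_n).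

Lemma admissible_ltn sig a b :
  admissible m sig -> (m (sig a) < m (sig b))%O -> (a < b)%N.
Proof.
case=> -[lin [[_ [anti [_ [_ ext]]]] mono]] _ lt_ab.
rewrite ltnNge; apply/negP => le_ba.
have eq_ab : m (sig a) = m (sig b) by apply: anti; rewrite ext ?mono // ltW.
by move: lt_ab; rewrite eq_ab ltxx.
Qed.

Lemma morse_fixed_relabel_ltn sig sig' (s : 'S_n) :
  admissible m sig -> admissible m sig' -> morse_fixed m sig sig' ->
  (forall a, sig' a = sig (s a)) ->
  forall a b, (m (sig' a) <= m (sig' b))%O -> (s a < s b)%N = (a < b)%N.
Proof.
move=> adm adm' fixed sig'E a b; rewrite le_eqVlt => /orP[/eqP eq_ab|lt_ab].
  by apply: fixed; rewrite -?sig'E.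
by rewrite (admissible_ltn adm' lt_ab) (@admissible_ltn sig) // -!sig'E.
Qed.

Lemma enumeration_perm (K : {set {set V}}) sig sig' :
  enumeration K sig -> enumeration K sig' -> exists s : 'S_n, forall a, sig' a = sig (s a).
Proof.
move=> [_ imK] [inj' imK'].
have preim a : exists b, sig b == sig' a.
  have : sig' a \in K by rewrite -imK'; apply/imsetP; exists a.
  by rewrite -imK => /imsetP[b _ ->]; exists b.
pose f a := xchoose (preim a).
have fK a : sig (f a) = sig' a by apply/eqP/(xchooseP (preim a)).
have f_inj : injective f by move=> a b /(congr1 sig); rewrite !fK => /inj'.
by exists (perm f_inj) => a; rewrite permE fK.
Qed.

Lemma bdmx_respects_morse K MV sig :
  morse_decomposition K MV m -> enumeration K sig -> respects_morse m sig (bdmx sig).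
Proof.
move=> md [_ imK] a b; rewrite mxE; case: ifP => [/andP[sub _] _|_]; last by rewrite eqxx.
have inK c : sig c \in K by rewrite -imK; apply/imsetP; exists c.
apply: (md (sig b) [:: sig a] (inK b)).
by rewrite /mv_path /= andbT /Fmv in_setU /cl in_set inK sub orbT.
Qed.

Section Enumerations.
Variables (K : {set {set V}}) (MV : {set {set {set V}}}) (sig sig' : 'I_n -> {set V}).
Variable s : 'S_n.
Hypotheses (md : morse_decomposition K MV m) (enum_sig : enumeration K sig).
Hypothesis sig'E : forall a, sig' a = sig (s a).
Hypothesis relabel_ltn :
  forall a b, (m (sig' a) <= m (sig' b))%O -> (s a < s b)%N = (a < b)%N.

Lemma ConMatOut_relabel :
  ConMatOut m sig' (bdmx sig') = relabel s (ConMatOut m sig (bdmx sig)).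
Proof.
have bnd := bdmx_respects_morse md enum_sig.
have -> : bdmx sig' = relabel s (bdmx sig).
  by apply/matrixP => a b; rewrite relabelE !mxE !sig'E.
apply: reduction_unique.
  exact/ConMatOut_reduction/(respects_morse_relabel sig'E).
exact/(is_reduction_relabel sig'E relabel_ltn)/ConMatOut_reduction.
Qed.

Lemma ConMatJ_relabel k :
  (k \in ConMatJ m sig' (bdmx sig')) = (s k \in ConMatJ m sig (bdmx sig)).
Proof.
have [bnd _ _] := ConMatOut_reduction (bdmx_respects_morse md enum_sig).
rewrite !inE ConMatOut_relabel.
by rewrite (homogeneous_relabel sig'E relabel_ltn) ?(targetable_relabel sig'E relabel_ltn).
Qed.

Lemma ConMatS_relabel i j i2 j2 :
  s (enum_val i2) = enum_val i -> s (enum_val j2) = enum_val j ->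
  ConMatS m sig (bdmx sig) i j = ConMatS m sig' (bdmx sig') i2 j2.
Proof.
(* A plain [rewrite mxE] would try to unfold [ConMatOut] while matching. *)
move=> si2 sj2; apply: etrans (mxE _ _ _ _) (etrans _ (esym (mxE _ _ _ _))).
by rewrite ConMatOut_relabel relabelE si2 sj2.
Qed.

End Enumerations.
End MorseFixed.

Theorem theorem3 (V : finType) (K : {set {set V}}) (MV : {set {set {set V}}})
  (d : Order.disp_t) (P : finPOrderType d) (m : {set V} -> P) (n : nat)
  (sig sig' : 'I_n -> {set V}) :
  simplicial_complex K ->
  multivector_field K MV ->
  morse_decomposition K MV m ->
  enumeration K sig -> enumeration K sig' ->
  admissible m sig -> admissible m sig' ->
  morse_fixed m sig sig' ->
  forall (i j : 'I_#|ConMatJ m sig (bdmx sig)|) (i' j' : 'I_n),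
    sig' i' = sig (enum_val i) -> sig' j' = sig (enum_val j) ->
    exists i2 j2 : 'I_#|ConMatJ m sig' (bdmx sig')|,
      [/\ enum_val i2 = i', enum_val j2 = j' &
          ConMatS m sig (bdmx sig) i j = ConMatS m sig' (bdmx sig') i2 j2].
Proof.
move=> _ _ md enum_sig enum_sig' adm adm' fixed i j i' j' ei' ej'.
have [s sig'E] := enumeration_perm enum_sig enum_sig'.
have lt_s := morse_fixed_relabel_ltn adm adm' fixed sig'E.
have [inj_sig _] := enum_sig.
have si' : s i' = enum_val i by apply: inj_sig; rewrite -sig'E.
have sj' : s j' = enum_val j by apply: inj_sig; rewrite -sig'E.
have Ji' : i' \in ConMatJ m sig' (bdmx sig').
  by rewrite (ConMatJ_relabel md enum_sig sig'E lt_s) si' enum_valP.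
have Jj' : j' \in ConMatJ m sig' (bdmx sig').
  by rewrite (ConMatJ_relabel md enum_sig sig'E lt_s) sj' enum_valP.
have ri' := enum_rankK_in Ji' Ji'; have rj' := enum_rankK_in Jj' Jj'.
exists (enum_rank_in Ji' i'), (enum_rank_in Jj' j'); split; [exact: ri' | exact: rj' |].
apply: (ConMatS_relabel md enum_sig sig'E lt_s).
  exact: etrans (congr1 s ri') si'.
exact: etrans (congr1 s rj') sj'.
Qed.
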